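(* Let $n\ge2$ and $|\psi\rangle_{ABS}\in\mathbb{C}^2\otimes\mathbb{C}^2\otimes\mathbb{C}^n$ be a normalized pure state belonging to the class $\mathcal{A}$ defined below. Let $\mathcal{P}_m$ be the maximum probability of obtaining a two-qubit maximally entangled (Bell) state shared by Alice and Bob by a protocol in which Sapna first performs a generalized measurement and communicates the outcome to Alice and Bob, who then perform LOCC between themselves; equivalently $\mathcal{P}_m=\max\sum_i p_i E_2(|\psi_i\rangle)$ over all pure-state decompositions $\rho_{AB}=\mathrm{Tr}_S|\psi\rangle\langle\psi|=\sum_i p_i|\psi_i\rangle\langle\psi_i|$. Then $$\mathcal{P}_m=\min\{E_{A(BS)},E_{B(AS)}\}.$$
   Context: For a normalized two-qubit pure state $|\phi\rangle$, $E_2(|\phi\rangle)=2\lambda_{\min}(\phi)$ where $\lambda_{\min}$ is the smaller of its two Schmidt coefficients (squared Schmidt numbers summing to 1, possibly zero). Write $\rho_A=\mathrm{Tr}_{BS}|\psi\rangle\langle\psi|$ with eigenvalues $p_0\ge p_1$ and $\rho_B=\mathrm{Tr}_{AS}|\psi\rangle\langle\psi|$ with eigenvalues $q_0\ge q_1$; set $E_{A(BS)}=2p_1$ and $E_{B(AS)}=2q_1$. For orthonormal bases $\{|i\rangle_A\}$, $\{|j\rangle_B\}$, $\{|l\rangle_S\}_{l=1}^n$, let $A^l$ be the $2\times2$ matrix with entries $(A^l)_{ij}={}_A\langle i|{}_B\langle j|{}_S\langle l|\psi\rangle$. The state belongs to class $\mathcal{A}$ if either (i) $E_{A(BS)}\ge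 E_{B(AS)}$ and there exist orthonormal bases for which $A^{l\dagger}A^l=\mathrm{diag}(q_0^l,q_1^l)$ for all $l$ with $q_0^l\ge q_1^l$ for all $l$, where $\sum_l q_0^l=q_0$ and $\sum_l q_1^l=q_1$; or (i') $E_{A(BS)}\le E_{B(AS)}$ and there exist orthonormal bases for which $A^lA^{l\dagger}=\mathrm{diag}(p_0^l,p_1^l)$ for all $l$ with $p_0^l\ge p_1^l$ for all $l$, where $\sum_l p_0^l=p_0$ and $\sum_l p_1^l=p_1$. *)

(* amplitudes in C := R[i] (complex numbers over an arbitrary
   real closed field R, e.g. the real numbers); R[i] is a numClosedFieldType
   with conjugation x^* and partial order <= (x <= y iff y - x is real >= 0). *)
From HB Require Import structures.
From mathcomp Require Import all_boot all_order all_algebra all_field.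
From mathcomp Require Import complex.
Set Implicit Arguments. Unset Strict Implicit. Unset Printing Implicit Defensive.
Import Order.TTheory GRing.Theory Num.Theory.
Local Open Scope ring_scope.

Section QState.
Variable R : rcfType.
Local Notation algC := (R[i]).

Definition adjmx (m k : nat) (M : 'M[algC]_(m, k)) : 'M[algC]_(k, m) :=
  (map_mx (fun x => x^*) M)^T.

Definition unitary (m : nat) (U : 'M[algC]_m) : Prop := adjmx U *m U = 1%:M.

Definition eigs2 (M : 'M[algC]_2) : seq algC :=
  sval (closed_field_poly_normal (char_poly M)).

Definition lam_min (M : 'M[algC]_2) : algC :=
  Num.min (eigs2 M)`_0 (eigs2 M)`_1.

(* a two-qubit pure state phi = sum_{ij} Phi i j |i>_A |j>_B, given by its
   coefficient matrix Phi; its reduced state Tr_B |phi><phi| = Phi Phi^dagger *)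
Definition redA2 (Phi : 'M[algC]_2) : 'M[algC]_2 := Phi *m adjmx Phi.

(* E_2(|phi>) = 2 * (smaller squared Schmidt coefficient)
   = 2 * (smaller eigenvalue of the reduced density matrix) *)
Definition E2 (Phi : 'M[algC]_2) : algC := 2 * lam_min (redA2 Phi).

(* three-party state |psi>_{ABS} = sum psi i j l |i>_A |j>_B |l>_S *)
Definition tstate (n : nat) := 'I_2 -> 'I_2 -> 'I_n -> algC.

Definition normalized3 n (psi : tstate n) : Prop :=
  \sum_(i < 2) \sum_(j < 2) \sum_(l < n) `|psi i j l| ^+ 2 = 1.

Definition normalized2 (Phi : 'M[algC]_2) : Prop :=
  \sum_(i < 2) \sum_(j < 2) `|Phi i j| ^+ 2 = 1.

Definition rhoA n (psi : tstate n) : 'M[algC]_2 :=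
  \matrix_(i, i') \sum_(j < 2) \sum_(l < n) psi i j l * (psi i' j l)^*.
Definition rhoB n (psi : tstate n) : 'M[algC]_2 :=
  \matrix_(j, j') \sum_(i < 2) \sum_(l < n) psi i j l * (psi i j' l)^*.

Definition eigenvalues2 (M : 'M[algC]_2) (x0 x1 : algC) : Prop :=
  char_poly M = ('X - x0%:P) * ('X - x1%:P) /\ x1 <= x0.

(* coefficients of psi in the orthonormal bases given by the columns of
   unitaries UA, UB, US:  <i|_A <j|_B <l|_S psi> *)
Definition coef n (UA UB : 'M[algC]_2) (US : 'M[algC]_n) (psi : tstate n)
  (i j : 'I_2) (l : 'I_n) : algC :=
  \sum_(a < 2) \sum_(b < 2) \sum_(c < n)
    (UA a i)^* * (UB b j)^* * (US c l)^* * psi a b c.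

Definition Amat n UA UB US (psi : tstate n) (l : 'I_n) : 'M[algC]_2 :=
  \matrix_(i, j) coef UA UB US psi i j l.

Definition diag2 (x y : algC) : 'M[algC]_2 :=
  \matrix_(i, j) (if i == j then (if i == ord0 then x else y) else 0).

(* class A; p0 >= p1 eigenvalues of rho_A, q0 >= q1 eigenvalues of rho_B *)
Definition classA n (psi : tstate n) (p0 p1 q0 q1 : algC) : Prop :=
  (2 * q1 <= 2 * p1 /\
   exists (UA UB : 'M[algC]_2) (US : 'M[algC]_n) (q0l q1l : 'I_n -> algC),
     unitary UA /\ unitary UB /\ unitary US /\
         (forall l, adjmx (Amat UA UB US psi l) *m Amat UA UB US psi l
                   = diag2 (q0l l) (q1l l)) /\
         (forall l, q1l l <= q0l l) /\
         \sum_(l < n) q0l l = q0 /\ \sum_(l < n) q1l l = q1)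
  \/
  (2 * p1 <= 2 * q1 /\
   exists (UA UB : 'M[algC]_2) (US : 'M[algC]_n) (p0l p1l : 'I_n -> algC),
     unitary UA /\ unitary UB /\ unitary US /\
         (forall l, Amat UA UB US psi l *m adjmx (Amat UA UB US psi l)
                   = diag2 (p0l l) (p1l l)) /\
         (forall l, p1l l <= p0l l) /\
         \sum_(l < n) p0l l = p0 /\ \sum_(l < n) p1l l = p1).

Definition is_decomp n (psi : tstate n) (k : nat) (p : 'I_k -> algC)
  (phi : 'I_k -> 'M[algC]_2) : Prop :=
  [/\ forall t, 0 <= p t,
      \sum_(t < k) p t = 1,
      forall t, normalized2 (phi t) &
      forall (a b a' b' : 'I_2),
        \sum_(t < k) p t * phi t a b * (phi t a' b')^*
        = \sum_(l < n) psi a b l * (psi a' b' l)^*].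

Definition decomp_value (k : nat) (p : 'I_k -> algC) (phi : 'I_k -> 'M[algC]_2)
  : algC := \sum_(t < k) p t * E2 (phi t).

Definition Pm_is n (psi : tstate n) (x : algC) : Prop :=
  (exists (k : nat) (p : 'I_k -> algC) (phi : 'I_k -> 'M[algC]_2), is_decomp psi p phi /\ decomp_value p phi = x) /\
  (forall (k : nat) (p : 'I_k -> algC) (phi : 'I_k -> 'M[algC]_2), is_decomp psi p phi -> decomp_value p phi <= x).

End QState.

From HB Require Import structures.
From mathcomp Require Import all_boot all_order all_algebra all_field.
From mathcomp Require Import complex ring.
Import Order.TTheory GRing.Theory Num.Theory.
Local Open Scope ring_scope.
Set Implicit Arguments. Unset Strict Implicit. Unset Printing Implicit Defensive.

(* If rho_AB = sum_t p_t |phi_t><phi_t|, then rho_A = sum_t p_t rho_t with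
   rho_t the reduced states of the phi_t.  The smaller eigenvalue of a 2x2
   Hermitian matrix is its minimal Rayleigh quotient, so testing rho_A on an
   eigenvector for p1 gives sum_t p_t lam_min(rho_t) <= p1; on Bob's side the
   same bound holds with q1, because phi_t and its transpose have the same
   Schmidt coefficients.  Hence no decomposition exceeds min(2 p1, 2 q1).
   Conversely, let Sapna measure in the basis of the class-A condition: the
   outcome-l state of AB is A^l up to local unitaries, of weight tr(A^l A^l+)
   and smaller squared Schmidt coefficient q1^l (resp. p1^l) divided by that
   weight, so the average entanglement is 2 sum_l q1^l = 2 q1 (resp. 2 p1),
   which is the minimum by the ordering assumed in class A. *)

Lemma big_ord2 (V : nmodType) (f : 'I_2 -> V) : \sum_(i < 2) f i = f 0 + f 1.
Proof. by rewrite big_ord_recr big_ord1; congr (f _ + f _); apply: val_inj. Qed.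

Section Mx2.
Variable F : comNzRingType.
Implicit Types A B : 'M[F]_2.

Lemma mxtrace2 A : \tr A = A 0 0 + A 1 1.
Proof. exact: big_ord2. Qed.

Lemma det_mx2 A : \det A = A 0 0 * A 1 1 - A 0 1 * A 1 0.
Proof.
have l00 : lift 0 0 = 1 :> 'I_2 by apply: val_inj.
have l10 : lift 1 0 = 0 :> 'I_2 by apply: val_inj.
rewrite (expand_det_row _ 0) big_ord2 /cofactor !det_mx11 !mxE /= l00 l10.
by rewrite expr0 modn_small // expr1 mulN1r mul1r mulrN.
Qed.

Lemma char_poly_mx2 A : char_poly A = 'X^2 - \tr A *: 'X + (\det A)%:P.
Proof.
apply/polyP => -[|[|[|i]]]; rewrite coefD coefB coefZ coefC coefX coefXn /=.
- by rewrite char_poly_det sqrrN expr1n mul1r mulr0 subr0 add0r.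
- by rewrite (char_poly_trace A) // mulr1 add0r addr0.
- have /monicP := char_poly_monic A.
  by rewrite /lead_coef size_char_poly => ->; rewrite mulr0 subr0 addr0.
- by rewrite mulr0 subr0 addr0 nth_default // size_char_poly.
Qed.

Lemma char_poly_mx2_XsubC A x y :
  char_poly A = ('X - x%:P) * ('X - y%:P) <-> x + y = \tr A /\ x * y = \det A.
Proof.
have -> : ('X - x%:P) * ('X - y%:P) = 'X^2 - (x + y) *: 'X + (x * y)%:P.
  by rewrite -!mul_polyC polyCD polyCM; ring.
rewrite char_poly_mx2; split => [E|[-> ->] //].
have coef1 := congr1 (fun p : {poly F} => p`_1) E.
have coef0 := congr1 (fun p : {poly F} => p`_0) E.
move: coef1 coef0; rewrite /= !coefD !coefN !coefZ !coefC !coefX !coefXn /=.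
by rewrite !mulr1 !mulr0 oppr0 !add0r !addr0 => /oppr_inj -> ->.
Qed.

Lemma char_poly_mx2_mulC A B : char_poly (A *m B) = char_poly (B *m A).
Proof. by rewrite !char_poly_mx2 mxtrace_mulC !det_mulmx mulrC. Qed.

Lemma char_poly_mx2_trmx A : char_poly A^T = char_poly A.
Proof. by rewrite !char_poly_mx2 mxtrace_tr det_tr. Qed.

Lemma det_mx2_sub_root A x y :
  x + y = \tr A -> x * y = \det A -> \det (A - y%:M) = 0.
Proof.
rewrite mxtrace2 !det_mx2 !mxE /= !mulr1n !mulr0n !subr0 => hs hp.
have -> : (A 0 0 - y) * (A 1 1 - y) - A 0 1 * A 1 0
    = (A 0 0 * A 1 1 - A 0 1 * A 1 0) - y * (A 0 0 + A 1 1) + y ^+ 2 by ring.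
by rewrite -hs -hp; ring.
Qed.

End Mx2.

Lemma sum_prod_eq (F : idomainType) (a b x y : F) :
  a + b = x + y -> a * b = x * y -> (a = x /\ b = y) \/ (a = y /\ b = x).
Proof.
move=> hs hp; have : (a - x) * (a - y) == 0.
  have -> : (a - x) * (a - y) = a * (a + b - (x + y)) - (a * b - x * y) by ring.
  by rewrite hs hp !subrr mulr0 subrr.
rewrite mulf_eq0 => /orP[] /eqP /subr0_eq ha; [left | right]; split=> //.
  by apply: (addrI a); rewrite hs ha.
by apply: (addrI a); rewrite hs ha addrC.
Qed.

Section Hermitian.
Variable C : numClosedFieldType.

Definition hermitian n (M : 'M[C]_n) := forall i j, (M i j)^* = M j i.

Definition qform n (M : 'M[C]_n) (v : 'I_n -> C) := \sum_i \sum_j (v i)^* * M i j * v j.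

Definition vnorm n (v : 'I_n -> C) := \sum_i (v i)^* * v i.

Lemma hermitian_diag_real n (M : 'M[C]_n) i : hermitian M -> M i i \is Num.real.
Proof. by move=> hM; rewrite CrealE hM. Qed.

Lemma hermitian_sum n k (c : 'I_k -> C) (M : 'I_k -> 'M[C]_n) :
  (forall t, c t \is Num.real) -> (forall t, hermitian (M t)) ->
  hermitian (\sum_t c t *: M t).
Proof.
move=> Rc hM i j; rewrite !summxE rmorph_sum; apply: eq_bigr => t _.
by rewrite !mxE rmorphM /= hM (CrealP (Rc t)).
Qed.

Lemma qform_sum n k (c : 'I_k -> C) (M : 'I_k -> 'M[C]_n) v :
  qform (\sum_t c t *: M t) v = \sum_t c t * qform (M t) v.
Proof.
rewrite /qform; under [RHS]eq_bigr => t _ do rewrite mulr_sumr.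
rewrite [RHS]exchange_big; apply: eq_bigr => i _.
under [RHS]eq_bigr => t _ do rewrite mulr_sumr.
rewrite [RHS]exchange_big; apply: eq_bigr => j _.
rewrite summxE mulr_sumr mulr_suml; apply: eq_bigr => t _.
by rewrite mxE; ring.
Qed.

Lemma qform2E (M : 'M[C]_2) v : qform M v =
  (v 0)^* * M 0 0 * v 0 + (v 0)^* * M 0 1 * v 1 + (v 1)^* * M 1 0 * v 0 + (v 1)^* * M 1 1 * v 1.
Proof. by rewrite /qform !big_ord2 addrA. Qed.

Lemma vnorm2E (v : 'I_2 -> C) : vnorm v = (v 0)^* * v 0 + (v 1)^* * v 1.
Proof. exact: big_ord2. Qed.

Lemma real_sum_prod_ge0 (a c : C) : a \is Num.real -> c \is Num.real ->
  0 <= a + c -> 0 <= a * c -> 0 <= a /\ 0 <= c.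
Proof.
suff ge0 (a' c' : C) : a' \is Num.real -> 0 <= a' + c' -> 0 <= a' * c' -> 0 <= a'.
  by move=> Ra Rc hs hp; split; [apply: (ge0 _ c) | apply: (ge0 _ a)];
    rewrite // (addrC, mulrC).
move=> Ra hs hp; rewrite real_leNgt ?real0 //; apply/negP => a_lt0.
move: hp; rewrite nmulr_rge0 // => c_le0.
by have := ltr_leD a_lt0 c_le0; rewrite addr0 => /lt_le_trans/(_ hs); rewrite ltxx.
Qed.

Lemma hermitian2_psd (N : 'M[C]_2) v :
  hermitian N -> 0 <= \tr N -> 0 <= \det N -> 0 <= qform N v.
Proof.
move=> hN tr_ge0 det_ge0; rewrite qform2E -(hN 0 1).
rewrite mxtrace2 in tr_ge0; rewrite det_mx2 -(hN 0 1) in det_ge0.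
set a := N 0 0 in tr_ge0 det_ge0 *; set c := N 1 1 in tr_ge0 det_ge0 *.
set b := N 0 1 in det_ge0 *.
have Ra : a \is Num.real by apply: hermitian_diag_real.
have [a_ge0 c_ge0] : 0 <= a /\ 0 <= c.
  apply: real_sum_prod_ge0 => //; first exact: hermitian_diag_real.
  by rewrite -(subrK (b * b^*) (a * c)) addr_ge0 // mul_conjC_ge0.
have [a0 | a_neq0] := eqVneq a 0.
  have b0 : b = 0.
    apply/eqP; rewrite -mul_conjC_eq0 eq_le mul_conjC_ge0 andbT.
    by move: det_ge0; rewrite a0 mul0r sub0r oppr_ge0.
  rewrite a0 b0 conjC0 !mulr0 !mul0r !add0r.
  by rewrite mulrAC mulr_ge0 // mulrC mul_conjC_ge0.
have a_gt0 : 0 < a by rewrite lt_def a_neq0.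
rewrite -(pmulr_rge0 _ a_gt0).
have -> : a * ((v 0)^* * a * v 0 + (v 0)^* * b * v 1 + (v 1)^* * b^* * v 0
                + (v 1)^* * c * v 1)
    = (a * v 0 + b * v 1) * (a * v 0 + b * v 1)^* + (a * c - b * b^*) * (v 1 * (v 1)^*).
  by rewrite rmorphD !rmorphM /= (CrealP Ra); ring.
by rewrite addr_ge0 ?mul_conjC_ge0 // mulr_ge0 ?mul_conjC_ge0.
Qed.

Lemma hermitian2_roots_real (M : 'M[C]_2) x y : hermitian M ->
  x + y = \tr M -> x * y = \det M -> x \is Num.real /\ y \is Num.real.
Proof.
move=> hM; rewrite mxtrace2 det_mx2 -(hM 0 1) => hs hp.
have R0 := hermitian_diag_real 0 hM; have R1 := hermitian_diag_real 1 hM.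
have Rs : x + y \is Num.real by rewrite hs rpredD.
have Rd : x - y \is Num.real.
  rewrite realEsqr.
  have -> : (x - y) ^+ 2 = (M 0 0 - M 1 1) ^+ 2 + 4%:R * (M 0 1 * (M 0 1)^*).
    have -> : (x - y) ^+ 2 = (x + y) ^+ 2 - 4%:R * (x * y) by ring.
    by rewrite hs hp; ring.
  rewrite addr_ge0 //; first by rewrite -realEsqr rpredB.
  by rewrite mulr_ge0 ?ler0n ?mul_conjC_ge0.
have two_neq0 : (2 : C) != 0 by rewrite pnatr_eq0.
split.
  have -> : x = (x + y + (x - y)) / 2 by field.
  by apply: rpredM; [exact: rpredD | rewrite rpredV realn].
have -> : y = (x + y - (x - y)) / 2 by field.
by apply: rpredM; [exact: rpredB | rewrite rpredV realn].
Qed.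

Lemma hermitian2_qform_ge (M : 'M[C]_2) x y v : hermitian M ->
  x + y = \tr M -> x * y = \det M -> y <= x -> y * vnorm v <= qform M v.
Proof.
move=> hM hs hp yx; have [_ Ry] := hermitian2_roots_real hM hs hp.
have hMy : hermitian (M - y%:M).
  by move=> i j; rewrite !mxE rmorphB rmorphMn /= hM (CrealP Ry) eq_sym.
rewrite -subr_ge0.
have -> : qform M v - y * vnorm v = qform (M - y%:M) v.
  by rewrite !qform2E vnorm2E !mxE /= !mulr1n !mulr0n; ring.
apply: hermitian2_psd => //; last by rewrite (det_mx2_sub_root hs hp).
rewrite mxtrace2 !mxE /= !mulr1n.
have -> : M 0 0 - y + (M 1 1 - y) = x + y - y - y by rewrite hs mxtrace2; ring.
by rewrite addrK subr_ge0.
Qed.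

Lemma hermitian2_eigenvector (M : 'M[C]_2) x y : hermitian M ->
  x + y = \tr M -> x * y = \det M -> exists2 v, 0 < vnorm v & qform M v = y * vnorm v.
Proof.
move=> hM hs hp; have [_ Ry] := hermitian2_roots_real hM hs hp.
have := det_mx2_sub_root hs hp.
rewrite det_mx2 !mxE /= !mulr1n !mulr0n !subr0 -(hM 0 1) => /eqP.
rewrite subr_eq0 => /eqP hdet.
have Ra : M 0 0 - y \is Num.real by rewrite rpredB ?hermitian_diag_real.
have [/andP[/eqP b0 /eqP a0] | ab_neq0] := boolP ((M 0 1 == 0) && (M 0 0 - y == 0)).
  exists (fun i => if i == 0 then 1 else 0);
    rewrite ?qform2E vnorm2E /= conjC1 conjC0 !mulr1 !mulr0 !addr0 ?ltr01 //.
  by rewrite mul1r mul0r addr0 mulr1; apply/eqP; rewrite -subr_eq0 a0.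
pose v (i : 'I_2) := if i == 0 then - M 0 1 else M 0 0 - y.
exists v.
  rewrite vnorm2E /= rmorphN mulrNN !(mulrC _^*) lt_def paddr_eq0 ?mul_conjC_ge0 //.
  by rewrite !mul_conjC_eq0 ab_neq0 addr_ge0 ?mul_conjC_ge0.
apply/eqP; rewrite -subr_eq0.
have -> : qform M v - y * vnorm v = (M 0 0 - y) * ((M 0 0 - y) * (M 1 1 - y) - M 0 1 * (M 0 1)^*).
  by rewrite qform2E vnorm2E /v /= rmorphN /= (CrealP Ra) -(hM 0 1); ring.
by rewrite hdet subrr mulr0.
Qed.

End Hermitian.

Section States.
Variable R : rcfType.
Local Notation C := R[i].
Implicit Types Q : 'M[C]_2.

Lemma lam_min_char_poly (A B : 'M[C]_2) : char_poly A = char_poly B -> lam_min A = lam_min B.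
Proof. by rewrite /lam_min /eigs2 => ->. Qed.

Lemma eigs2_trace_det (M : 'M[C]_2) :
  exists s0 s1, [/\ eigs2 M = [:: s0; s1], s0 + s1 = \tr M & s0 * s1 = \det M].
Proof.
rewrite /eigs2; case: closed_field_poly_normal => s /=.
rewrite (monicP (char_poly_monic M)) scale1r => hs.
have := size_char_poly M; rewrite hs size_prod_XsubC.
case: s hs => [|s0 [|s1 []]] // hs _; exists s0, s1.
have /char_poly_mx2_XsubC[hs0 hp0] : char_poly M = ('X - s0%:P) * ('X - s1%:P).
  by rewrite hs !big_cons big_nil mulr1.
by split.
Qed.

Lemma lam_min_eq (M : 'M[C]_2) x y :
  x + y = \tr M -> x * y = \det M -> y <= x -> lam_min M = y.
Proof.
move=> hs hp yx; rewrite /lam_min; have [s0 [s1 [-> h0 h1]]] := eigs2_trace_det M.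
by have [[-> ->] | [-> ->]] := sum_prod_eq (etrans h0 (esym hs)) (etrans h1 (esym hp));
  [rewrite min_r | rewrite min_l].
Qed.

Lemma hermitian_lam_min (M : 'M[C]_2) : hermitian M ->
  exists x, [/\ x + lam_min M = \tr M, x * lam_min M = \det M & lam_min M <= x].
Proof.
move=> hM; have [s0 [s1 [_ hs hp]]] := eigs2_trace_det M.
have [R0 R1] := hermitian2_roots_real hM hs hp.
suff lam_min_root a b : a + b = \tr M -> a * b = \det M -> b <= a ->
    exists x, [/\ x + lam_min M = \tr M, x * lam_min M = \det M & lam_min M <= x].
  have [s01 | s10] := real_leP R0 R1.
    by apply: (lam_min_root s1 s0); rewrite // (addrC, mulrC).
  exact: (lam_min_root s0 s1 hs hp (ltW s10)).
by move=> hs' hp' ba; exists a; rewrite (lam_min_eq hs' hp' ba).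
Qed.

Lemma lam_min_qform_le (M : 'M[C]_2) v : hermitian M -> lam_min M * vnorm v <= qform M v.
Proof.
by move=> hM; have [x [hs hp le]] := hermitian_lam_min hM; exact: hermitian2_qform_ge hs hp le.
Qed.

Lemma sum_lam_min_le k (c : 'I_k -> C) (M : 'I_k -> 'M[C]_2) x y :
  (forall t, 0 <= c t) -> (forall t, hermitian (M t)) ->
  eigenvalues2 (\sum_t c t *: M t) x y -> \sum_t c t * lam_min (M t) <= y.
Proof.
move=> c_ge0 hM [/char_poly_mx2_XsubC[hs hp] _].
have Rc t : c t \is Num.real := ger0_real (c_ge0 t).
have [v v_gt0 hv] := hermitian2_eigenvector (hermitian_sum Rc hM) hs hp.
rewrite -(ler_pM2r v_gt0) -hv qform_sum mulr_suml.
by apply: ler_sum => t _; rewrite -mulrA ler_wpM2l ?lam_min_qform_le.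
Qed.

Lemma redA2_hermitian (Phi : 'M[C]_2) : hermitian (redA2 Phi).
Proof.
move=> i j; rewrite !mxE rmorph_sum; apply: eq_bigr => k _.
by rewrite !mxE rmorphM /= conjCK mulrC.
Qed.

Lemma lam_min_redA2_trmx (Phi : 'M[C]_2) : lam_min (redA2 Phi^T) = lam_min (redA2 Phi).
Proof.
apply: lam_min_char_poly.
have -> : redA2 Phi^T = (adjmx Phi *m Phi)^T.
  by rewrite trmx_mul /adjmx trmxK /redA2 /adjmx map_trmx trmxK.
by rewrite char_poly_mx2_trmx char_poly_mx2_mulC.
Qed.

Section Decomp.
Variables (n : nat) (psi : tstate R n) (k : nat) (p : 'I_k -> C) (phi : 'I_k -> 'M[C]_2).
Hypothesis decomp : is_decomp psi p phi.

Lemma rhoA_decomp : rhoA psi = \sum_t p t *: redA2 (phi t).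
Proof.
case: decomp => _ _ _ hdec; apply/matrixP => i i'; rewrite !mxE summxE.
under eq_bigr => j _ do rewrite -hdec.
rewrite exchange_big; apply: eq_bigr => t _; rewrite !mxE mulr_sumr.
by apply: eq_bigr => j _; rewrite !mxE mulrA.
Qed.

Lemma rhoB_decomp : rhoB psi = \sum_t p t *: redA2 (phi t)^T.
Proof.
case: decomp => _ _ _ hdec; apply/matrixP => j j'; rewrite !mxE summxE.
under eq_bigr => i _ do rewrite -hdec.
rewrite exchange_big; apply: eq_bigr => t _; rewrite !mxE mulr_sumr.
by apply: eq_bigr => i _; rewrite !mxE mulrA.
Qed.

Lemma decomp_value_le p0 p1 q0 q1 :
  eigenvalues2 (rhoA psi) p0 p1 -> eigenvalues2 (rhoB psi) q0 q1 ->
  decomp_value p phi <= Num.min (2 * p1) (2 * q1).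
Proof.
rewrite rhoA_decomp rhoB_decomp => hA hB; have [p_ge0 _ _ _] := decomp.
have -> : decomp_value p phi = 2 * \sum_t p t * lam_min (redA2 (phi t)).
  by rewrite mulr_sumr; apply: eq_bigr => t _; rewrite mulrCA.
have leA : \sum_t p t * lam_min (redA2 (phi t)) <= p1.
  by apply: sum_lam_min_le p_ge0 _ hA => t; exact: redA2_hermitian.
have leB : \sum_t p t * lam_min (redA2 (phi t)) <= q1.
  under eq_bigr => t _ do rewrite -lam_min_redA2_trmx.
  by apply: sum_lam_min_le p_ge0 _ hB => t; exact: redA2_hermitian.
by rewrite /Order.min; case: ifP; rewrite ler_pM2l.
Qed.

End Decomp.

Lemma adjmxM m k l (X : 'M[C]_(m, k)) (Y : 'M[C]_(k, l)) :
  adjmx (X *m Y) = adjmx Y *m adjmx X.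
Proof. by rewrite /adjmx map_mxM trmx_mul. Qed.

Lemma adjmx_trmx m k (X : 'M[C]_(m, k)) : adjmx X^T = map_mx Num.conj_op X.
Proof. by rewrite /adjmx map_trmx trmxK. Qed.

Lemma unitary_mulmx_adj m (U : 'M[C]_m) : unitary U -> U *m adjmx U = 1%:M.
Proof. exact: mulmx1C. Qed.

Lemma unitary_trmx_conj m (U : 'M[C]_m) : unitary U -> U^T *m map_mx Num.conj_op U = 1%:M.
Proof. by move=> hU; rewrite -[map_mx _ U]trmxK -trmx_mul -/(adjmx U) hU trmx1. Qed.

Lemma unitary_conj_trmx m (U : 'M[C]_m) : unitary U -> map_mx Num.conj_op U *m U^T = 1%:M.
Proof.
move=> hU; rewrite -[map_mx _ U]trmxK -trmx_mul -/(adjmx U).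
by rewrite (unitary_mulmx_adj hU) trmx1.
Qed.

(* The unnormalized state of AB after Sapna measures in the basis of the columns
   of US and obtains outcome l. *)
Definition slice n (US : 'M[C]_n) (psi : tstate R n) (l : 'I_n) : 'M[C]_2 :=
  \matrix_(a, b) \sum_c (US c l)^* * psi a b c.

Lemma slice_outer n (US : 'M[C]_n) psi a b a' b' : unitary US ->
  \sum_l slice US psi l a b * (slice US psi l a' b')^* = \sum_l psi a b l * (psi a' b' l)^*.
Proof.
move=> hU.
have orth c c' : \sum_l US c' l * (US c l)^* = (c' == c)%:R.
  have /matrixP/(_ c' c) := unitary_mulmx_adj hU; rewrite !mxE => <-.
  by apply: eq_bigr => l _; rewrite !mxE.
transitivity (\sum_l \sum_c \sum_c' psi a b c * (psi a' b' c')^* * (US c' l * (US c l)^*)).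
  apply: eq_bigr => l _; rewrite !mxE rmorph_sum mulr_suml; apply: eq_bigr => c _.
  rewrite mulr_sumr; apply: eq_bigr => c' _; rewrite rmorphM /= conjCK; ring.
rewrite exchange_big; apply: eq_bigr => c _; rewrite exchange_big /=.
under eq_bigr => c' _ do rewrite -mulr_sumr orth mulr_natr mulrb.
by rewrite -big_mkcond big_pred1_eq.
Qed.

Lemma Amat_slice n (UA UB : 'M[C]_2) (US : 'M[C]_n) psi l :
  Amat UA UB US psi l = adjmx UA *m slice US psi l *m map_mx Num.conj_op UB.
Proof.
apply/matrixP => i j; rewrite !mxE /coef.
under [RHS]eq_bigr => b _ do rewrite !mxE big_distrl /=.
rewrite [RHS]exchange_big /=; apply: eq_bigr => a _; apply: eq_bigr => b _.
rewrite !mxE mulr_sumr mulr_suml; apply: eq_bigr => c _.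
by ring.
Qed.

Lemma char_poly_redA2_slice n (UA UB : 'M[C]_2) (US : 'M[C]_n) psi l :
  unitary UA -> unitary UB ->
  char_poly (redA2 (slice US psi l)) = char_poly (redA2 (Amat UA UB US psi l)).
Proof.
move=> hA hB; set A := Amat UA UB US psi l.
have -> : slice US psi l = UA *m A *m UB^T.
  by rewrite /A Amat_slice !mulmxA (unitary_mulmx_adj hA) mul1mx -mulmxA
    (unitary_conj_trmx hB) mulmx1.
have -> : redA2 (UA *m A *m UB^T) = UA *m redA2 A *m adjmx UA.
  by rewrite /redA2 !adjmxM adjmx_trmx !mulmxA -(mulmxA _ UB^T) (unitary_trmx_conj hB) mulmx1.
by rewrite -mulmxA char_poly_mx2_mulC -mulmxA hA mulmx1.
Qed.

Definition weight Q : C := \tr (redA2 Q).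

Lemma weightE Q : weight Q = \sum_i \sum_j `|Q i j| ^+ 2.
Proof.
apply: eq_bigr => i _; rewrite mxE; apply: eq_bigr => j _.
by rewrite !mxE normCK.
Qed.

Lemma weight_ge0 Q : 0 <= weight Q.
Proof. by rewrite weightE; do 2![apply: sumr_ge0 => ? _]; rewrite exprn_ge0. Qed.

Lemma weight_eq0 Q : weight Q = 0 -> Q = 0.
Proof.
rewrite weightE => /eqP; rewrite psumr_eq0 => [/allP sum0|i _]; last first.
  by apply: sumr_ge0 => j _; rewrite exprn_ge0.
apply/matrixP => i j; have /= := sum0 i (mem_index_enum i).
rewrite psumr_eq0 => [/allP/(_ j (mem_index_enum j))|]; last by move=> ? _; rewrite exprn_ge0.
by rewrite sqrf_eq0 normr_eq0 mxE => /eqP.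
Qed.

Lemma redA2Z (c : C) Q : redA2 (c *: Q) = (c * c^*) *: redA2 Q.
Proof.
apply/matrixP => i j; rewrite !mxE mulr_sumr; apply: eq_bigr => k _.
by rewrite !mxE rmorphM /=; ring.
Qed.

Lemma invsqrtC_mul_conj (w : C) : 0 <= w -> (sqrtC w)^-1 * ((sqrtC w)^-1)^* = w^-1.
Proof.
move=> w_ge0; have Rs : sqrtC w \is Num.real by rewrite ger0_real ?sqrtC_ge0.
by rewrite fmorphV /= (CrealP Rs) -invfM -expr2 sqrtCK.
Qed.

(* The null slice is sent to an arbitrary normalized state: it gets weight 0. *)
Definition normalize Q : 'M[C]_2 :=
  if weight Q == 0 then delta_mx 0 0 else (sqrtC (weight Q))^-1 *: Q.

Lemma redA2_normalize Q : weight Q != 0 -> redA2 (normalize Q) = (weight Q)^-1 *: redA2 Q.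
Proof. by rewrite /normalize => /negPf ->; rewrite redA2Z invsqrtC_mul_conj ?weight_ge0. Qed.

Lemma normalize_normalized Q : normalized2 (normalize Q).
Proof.
rewrite /normalized2 -weightE; have [w0 | w_neq0] := eqVneq (weight Q) 0.
  by rewrite /normalize w0 eqxx weightE !big_ord2 !mxE /= normr1 normr0; ring.
by rewrite {1}/weight redA2_normalize // mxtraceZ -/(weight Q) mulVf.
Qed.

Lemma weight_normalize_outer Q a b a' b' :
  weight Q * (normalize Q a b * (normalize Q a' b')^*) = Q a b * (Q a' b')^*.
Proof.
have [w0 | w_neq0] := eqVneq (weight Q) 0.
  by rewrite w0 mul0r (weight_eq0 w0) mxE mul0r.
rewrite /normalize (negPf w_neq0) !mxE rmorphM /=.
by rewrite mulrACA invsqrtC_mul_conj ?weight_ge0 // mulVKf.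
Qed.

Lemma weight_E2_normalize Q x y :
  eigenvalues2 (redA2 Q) x y -> weight Q * E2 (normalize Q) = 2 * y.
Proof.
case=> /char_poly_mx2_XsubC[hs hp] yx.
have [w0 | w_neq0] := eqVneq (weight Q) 0.
  move: hs hp; rewrite -/(weight Q) w0 (weight_eq0 w0) /redA2 mul0mx det0 => hs hp.
  have : y ^+ 2 = (x + y) * y - x * y by ring.
  by rewrite hs hp mul0r subrr => /eqP; rewrite sqrf_eq0 => /eqP ->; rewrite !mulr0 mul0r.
have w_gt0 : 0 < weight Q by rewrite lt_def w_neq0 weight_ge0.
rewrite /E2 redA2_normalize // (@lam_min_eq _ (x / weight Q) (y / weight Q)).
- by field.
- by rewrite mxtraceZ -hs; field.
- by rewrite detZ -hp; field.
- by rewrite ler_pM2r ?invr_gt0.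
Qed.

Lemma slices_decomp n (US : 'M[C]_n) (psi : tstate R n) (x y : 'I_n -> C) :
  unitary US -> normalized3 psi ->
  (forall l, eigenvalues2 (redA2 (slice US psi l)) (x l) (y l)) ->
  exists k (p : 'I_k -> C) (phi : 'I_k -> 'M[C]_2),
    is_decomp psi p phi /\ decomp_value p phi = 2 * \sum_l y l.
Proof.
move=> hU hpsi hxy.
exists n, (fun l => weight (slice US psi l)), (fun l => normalize (slice US psi l)).
split; last first.
  by rewrite mulr_sumr; apply: eq_bigr => l _; exact: weight_E2_normalize.
split=> [l | | l | a b a' b'].
- exact: weight_ge0.
- rewrite -hpsi; under eq_bigr => l _ do rewrite weightE.
  rewrite exchange_big; apply: eq_bigr => a _; rewrite exchange_big; apply: eq_bigr => b _.
  under eq_bigr => l _ do rewrite normCK.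
  by rewrite (slice_outer psi _ _ _ _ hU); apply: eq_bigr => l _; rewrite normCK.
- exact: normalize_normalized.
- rewrite -(slice_outer psi _ _ _ _ hU); apply: eq_bigr => l _.
  by rewrite -mulrA weight_normalize_outer.
Qed.

Lemma char_poly_diag2 (x y : C) : char_poly (diag2 x y) = ('X - x%:P) * ('X - y%:P).
Proof. by apply/char_poly_mx2_XsubC; rewrite mxtrace2 det_mx2 !mxE /= mulr0 subr0. Qed.

Lemma classA_slices n (psi : tstate R n) p0 p1 q0 q1 : classA psi p0 p1 q0 q1 ->
  exists (US : 'M[C]_n) (x y : 'I_n -> C),
    [/\ unitary US, forall l, eigenvalues2 (redA2 (slice US psi l)) (x l) (y l)
      & 2 * \sum_l y l = Num.min (2 * p1) (2 * q1)].
Proof.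
case=> [[q1p1 [UA [UB [US [x [y [hUA [hUB [hUS [hA [yx [_ sum_y]]]]]]]]]]]]
      | [p1q1 [UA [UB [US [x [y [hUA [hUB [hUS [hA [yx [_ sum_y]]]]]]]]]]]]];
  exists US, x, y.
  split=> [| l |]; [done | split=> // | by rewrite sum_y min_r].
  rewrite (char_poly_redA2_slice _ _ _ hUA hUB) -char_poly_diag2 -hA.
  exact: char_poly_mx2_mulC.
split=> [| l |]; [done | split=> // | by rewrite sum_y min_l].
by rewrite (char_poly_redA2_slice _ _ _ hUA hUB) -char_poly_diag2 -hA.
Qed.

End States.

Theorem theorem6 (R : rcfType) (n : nat) (hn : (2 <= n)%N) (psi : tstate R n)
  (p0 p1 q0 q1 : R[i])
  (hpsi : normalized3 psi)
  (hA : eigenvalues2 (rhoA psi) p0 p1)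
  (hB : eigenvalues2 (rhoB psi) q0 q1)
  (hclass : classA psi p0 p1 q0 q1) :
  Pm_is psi (Num.min (2 * p1) (2 * q1)).
Proof.
split=> [|k p phi hdec]; last exact (decomp_value_le hdec hA hB).
have [US [x [y [hUS hxy <-]]]] := classA_slices hclass.
exact (slices_decomp hUS hpsi hxy).
Qed.
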